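(* Let $\mathcal{C}$ be a code and let $m$ be its minimum neuron number. Then $\mathcal{C}$ is isomorphic to a reduced code $\mathcal{D}\subseteq 2^{[m]}$. Moreover this reduced representative is unique up to permutation of neurons: if $\mathcal{D}\subseteq 2^{[m]}$ and $\mathcal{D}'\subseteq 2^{[m']}$ are reduced codes both isomorphic to $\mathcal{C}$, then $m=m'$ and there is a permutation $w$ of $[m]$ with $\mathcal{D}'=\{w(d)\mid d\in\mathcal{D}\}$.
   Context: A code is a subset $\mathcal{C}\subseteq 2^{[n]}$; elements are codewords. For $\sigma\subseteq[n]$, $\mathrm{Tk}_{\mathcal{C}}(\sigma)=\{c\in\mathcal{C}\mid\sigma\subseteq c\}$, and $\mathrm{Tk}_{\mathcal{C}}(i)$ means $\mathrm{Tk}_{\mathcal{C}}(\{i\})$. A trunk in $\mathcal{C}$ is a subset of $\mathcal{C}$ that is empty or equal to $\mathrm{Tk}_{\mathcal{C}}(\sigma)$ for some $\sigma\subseteq[n]$. A function $f:\mathcal{C}\to\mathcal{D}$ between codes is a morphism if preimages of trunks in $\mathcal{D}$ are trunks in $\mathcal{C}$; an isomorphism is a morphism with an inverse function that is a morphism. A neuron $i\in[n]$ is trivial in $\mathcal{C}\subseteq 2^{[n]}$ if $\mathrm{Tk}_{\mathcal{C}}(i)=\emptyset$. A nontrivial neuron $i$ is redundant if there is $\sigma\subseteq[n]$ with $i\notin\sigma$ and $\mathrm{Tk}_{\mathcal{C}}(i)=\mathrm{Tk}_{\mathcal{C}}(\sigma)$. A code $\mathcal{C}\subseteq 2^{[n]}$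 is reduced if no neuron of $[n]$ is trivial or redundant. The minimum neuron number of $\mathcal{C}$ is the smallest $m$ such that $\mathcal{C}$ is isomorphic to a code contained in $2^{[m]}$. *)

From mathcomp Require Import all_boot.
Set Implicit Arguments. Unset Strict Implicit. Unset Printing Implicit Defensive.

Definition code (n : nat) := {set {set 'I_n}}.

Definition Tk n (C : code n) (sigma : {set 'I_n}) : {set {set 'I_n}} :=
  [set c in C | sigma \subset c].

Definition is_trunk n (C : code n) (T : {set {set 'I_n}}) : Prop :=
  T = set0 \/ exists sigma : {set 'I_n}, T = Tk C sigma.

Definition maps_into n m (C : code n) (D : code m)
    (f : {set 'I_n} -> {set 'I_m}) : Prop :=
  forall c, c \in C -> f c \in D.

Definition preim_code n m (C : code n) (f : {set 'I_n} -> {set 'I_m})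
    (T : {set {set 'I_m}}) : {set {set 'I_n}} :=
  [set c in C | f c \in T].

Definition morphism n m (C : code n) (D : code m)
    (f : {set 'I_n} -> {set 'I_m}) : Prop :=
  maps_into C D f /\
  forall T, is_trunk D T -> is_trunk C (preim_code C f T).

Definition code_iso n m (C : code n) (D : code m) : Prop :=
  exists (f : {set 'I_n} -> {set 'I_m}) (g : {set 'I_m} -> {set 'I_n}),
    [/\ morphism C D f, morphism D C g,
        (forall c, c \in C -> g (f c) = c) &
        (forall d, d \in D -> f (g d) = d)].

Definition trivial_neuron n (C : code n) (i : 'I_n) : Prop :=
  Tk C [set i] = set0.

Definition redundant_neuron n (C : code n) (i : 'I_n) : Prop :=
  ~ trivial_neuron C i /\
  exists sigma : {set 'I_n}, i \notin sigma /\ Tk C [set i] = Tk C sigma.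

Definition reduced n (C : code n) : Prop :=
  forall i : 'I_n, ~ trivial_neuron C i /\ ~ redundant_neuron C i.

Definition min_neuron_number n (C : code n) (m : nat) : Prop :=
  (exists D : code m, code_iso C D) /\
  (forall k, (exists D : code k, code_iso C D) -> m <= k).

From mathcomp Require Import all_boot.
Set Implicit Arguments. Unset Strict Implicit. Unset Printing Implicit Defensive.

(* Existence: a trivial or redundant neuron can be deleted without changing
   the isomorphism class, because every nonempty trunk is still Tk of a set
   avoiding it; so a representative on the minimum number of neurons is reduced.
   Uniqueness: if f : D -> D' is an isomorphism of reduced codes, the preimage
   of Tk(j) is some Tk(s) and pulling back along the inverse writes Tk(j) as
   Tk(t), so j lies in t by irredundancy; a sandwich argument then shows that
   the preimage of Tk(j) is Tk(i) for a single neuron i.  This matching of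
   neurons is a bijection, and f acts on codewords by relabelling along it. *)

Lemma setD1_notin (T : finType) (A : {set T}) x : x \notin A -> A :\ x = A.
Proof. by move=> xA; apply/setDidPl; rewrite disjoint_sym disjoints1. Qed.

Lemma mem_Tk n (D : code n) (s c : {set 'I_n}) :
  (c \in Tk D s) = (c \in D) && (s \subset c).
Proof. by rewrite inE. Qed.

Lemma mem_preim_code n m (D : code n) (f : {set 'I_n} -> {set 'I_m}) T c :
  (c \in preim_code D f T) = (c \in D) && (f c \in T).
Proof. by rewrite inE. Qed.

Lemma Tk_setU n (D : code n) (s t : {set 'I_n}) : Tk D (s :|: t) = Tk D s :&: Tk D t.
Proof. by apply/setP => c; rewrite !inE subUset; case: (c \in D). Qed.

Lemma Tk_subset n (D : code n) (s t : {set 'I_n}) : s \subset t -> Tk D t \subset Tk D s.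
Proof.
move=> st; apply/subsetP => c; rewrite !mem_Tk => /andP [-> tc].
exact: subset_trans tc.
Qed.

Lemma Tk_sub_code n (D : code n) (s : {set 'I_n}) : Tk D s \subset D.
Proof. by apply/subsetP => c; rewrite mem_Tk => /andP []. Qed.

Lemma nonempty_trunk_Tk n (D : code n) (X : {set {set 'I_n}}) c :
  is_trunk D X -> c \in X -> exists s, X = Tk D s.
Proof. by case=> [->|//]; rewrite inE. Qed.

Lemma preim_code0 n m (D : code n) (f : {set 'I_n} -> {set 'I_m}) :
  preim_code D f set0 = set0.
Proof. by apply/setP => c; rewrite !inE andbF. Qed.

Lemma preim_codeS n m (D : code n) (f : {set 'I_n} -> {set 'I_m})
    (T U : {set {set 'I_m}}) :
  T \subset U -> preim_code D f T \subset preim_code D f U.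
Proof.
move=> TU; apply/subsetP => c; rewrite !mem_preim_code => /andP [-> fcT].
exact: (subsetP TU).
Qed.

Lemma preim_code_comp n m k (A : code n) (B : code m)
    (f : {set 'I_n} -> {set 'I_m}) (h : {set 'I_m} -> {set 'I_k}) T :
  maps_into A B f -> preim_code A (h \o f) T = preim_code A f (preim_code B h T).
Proof.
move=> fAB; apply/setP => c; rewrite !mem_preim_code /=.
by case cA: (c \in A) => //=; rewrite fAB.
Qed.

Lemma preim_code_cancel n m (A : code n) (B : code m)
    (f : {set 'I_n} -> {set 'I_m}) (g : {set 'I_m} -> {set 'I_n}) (X : {set {set 'I_n}}) :
  maps_into A B f -> {in A, cancel f g} -> X \subset A ->
  preim_code A f (preim_code B g X) = X.
Proof.
move=> fAB gf XA; rewrite -(preim_code_comp _ _ fAB); apply/setP => c.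
rewrite mem_preim_code /=; case cA: (c \in A); first by rewrite gf.
by apply/esym/negbTE; apply: contraFN cA; apply: (subsetP XA).
Qed.

Lemma morphism_comp n m k (A : code n) (B : code m) (E : code k) f h :
  morphism A B f -> morphism B E h -> morphism A E (h \o f).
Proof.
move=> [fAB fT] [hBE hT]; split => [c cA|T ET]; first exact/hBE/fAB.
by rewrite (preim_code_comp _ _ fAB); apply/fT/hT.
Qed.

Lemma code_iso_sym n m (A : code n) (B : code m) : code_iso A B -> code_iso B A.
Proof. by move=> [f [g [? ? ? ?]]]; exists g, f; split. Qed.

Lemma code_iso_trans n m k (A : code n) (B : code m) (E : code k) :
  code_iso A B -> code_iso B E -> code_iso A E.
Proof.
move=> [f [g [mf mg gf fg]]] [f' [g' [mf' mg' gf' fg']]].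
exists (f' \o f), (g \o g'); split; [exact: morphism_comp mf mf'
  | exact: morphism_comp mg' mg | move=> c cA | move=> d dE] => /=.
- by rewrite gf' ?gf //; apply: mf.1.
- by rewrite fg ?fg' //; apply: mg'.1.
Qed.

Lemma morphism_preim_Tk n m (D : code n) (D' : code m) f s c :
  morphism D D' f -> c \in D -> f c \in Tk D' s ->
  exists t, preim_code D f (Tk D' s) = Tk D t.
Proof.
move=> [_ fT] cD fcs; apply: (@nonempty_trunk_Tk _ _ _ c).
  by apply: fT; right; exists s.
by rewrite mem_preim_code cD.
Qed.

Definition del_neuron k (i : 'I_k.+1) (c : {set 'I_k.+1}) : {set 'I_k} :=
  [set j | lift i j \in c].

Lemma subset_del_neuron k (i : 'I_k.+1) (t : {set 'I_k}) c :
  (t \subset del_neuron i c) = (lift i @: t \subset c).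
Proof.
apply/subsetP/subsetP => [tc _ /imsetP [j jt ->]|tc j jt].
  by have := tc j jt; rewrite inE.
by rewrite inE; apply/tc/imset_f.
Qed.

Lemma lift_del_neuron k (i : 'I_k.+1) c : lift i @: del_neuron i c = c :\ i.
Proof.
apply/setP => x; rewrite !inE; case: (unliftP i x) => [j ->|->].
  by rewrite eq_sym neq_lift mem_imset ?inE //; apply: lift_inj.
rewrite eqxx /=; apply/imsetP => [[j _ /eqP]].
by rewrite (negbTE (neq_lift _ _)).
Qed.

Lemma morphism_del_neuron k (D : code k.+1) (i : 'I_k.+1) :
  morphism D (del_neuron i @: D) (del_neuron i).
Proof.
split => [c cD|T [->|[t ->]]]; first exact: imset_f.
  by left; rewrite preim_code0.
right; exists (lift i @: t); apply/setP => c.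
rewrite mem_preim_code !mem_Tk; case cD: (c \in D) => //=.
by rewrite imset_f //= subset_del_neuron.
Qed.

(* Both trivial and redundant neurons are dispensable; this is the only
   property of them that the deletion argument uses. *)
Definition dispensable n (D : code n) (i : 'I_n) : Prop :=
  forall s, Tk D s = set0 \/ exists2 t : {set 'I_n}, i \notin t & Tk D s = Tk D t.

Lemma trivial_or_redundant_dispensable n (D : code n) (i : 'I_n) :
  trivial_neuron D i \/ redundant_neuron D i -> dispensable D i.
Proof.
move=> Di s; case si: (i \in s); last by right; exists s; rewrite ?si.
rewrite -(setD1K si) Tk_setU.
case: Di => [-> | [_ [t [ti ->]]]]; first by left; rewrite set0I.
by right; exists (t :|: s :\ i); rewrite ?Tk_setU // !inE eqxx negb_or ti.
Qed.

Section DeleteDispensableNeuron.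

Variables (k : nat) (D : code k.+1) (i : 'I_k.+1).
Hypothesis Di : dispensable D i.

Lemma dispensable_mem_determined :
  exists b : {set 'I_k} -> bool,
    {in D, forall c : {set 'I_k.+1}, (i \in c) = b (del_neuron i c)}.
Proof.
case: (Di [set i]) => [Ti | [t ti Ti]].
  exists (fun _ => false) => c cD; apply/negbTE/negP => ic.
  have : c \in Tk D [set i] by rewrite mem_Tk cD sub1set.
  by rewrite Ti inE.
exists (fun d : {set 'I_k} => t \subset lift i @: d) => c cD.
rewrite lift_del_neuron subsetD1 ti andbT.
by move/setP: Ti => /(_ c); rewrite !mem_Tk cD sub1set.
Qed.

Variable b : {set 'I_k} -> bool.
Hypothesis memb : {in D, forall c : {set 'I_k.+1}, (i \in c) = b (del_neuron i c)}.

Definition ins_neuron (d : {set 'I_k}) : {set 'I_k.+1} :=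
  lift i @: d :|: (if b d then [set i] else set0).

Lemma ins_neuronK : {in D, cancel (del_neuron i) ins_neuron}.
Proof.
move=> c cD; rewrite /ins_neuron -memb // lift_del_neuron.
case: ifP => ic; first by rewrite setUC setD1K.
by rewrite setU0 setD1_notin ?ic.
Qed.

Lemma del_neuronK : cancel ins_neuron (del_neuron i).
Proof.
move=> d; apply/setP => j; rewrite /ins_neuron !inE mem_imset; last exact: lift_inj.
by case: ifP; rewrite ?inE ?orbF // eq_sym (negbTE (neq_lift _ _)) orbF.
Qed.

Lemma morphism_ins_neuron : morphism (del_neuron i @: D) D ins_neuron.
Proof.
split => [_ /imsetP [c cD ->]|T [->|[s ->]]]; first by rewrite ins_neuronK.
  by left; rewrite preim_code0.
case: (Di s) => [->|[t ti ->]]; first by left; rewrite preim_code0.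
right; exists (del_neuron i t); apply/setP => d.
rewrite mem_preim_code !mem_Tk; case/boolP: (d \in del_neuron i @: D) => //=.
case/imsetP => c cD ->; rewrite ins_neuronK // cD /=.
by rewrite subset_del_neuron lift_del_neuron setD1_notin.
Qed.

End DeleteDispensableNeuron.

Lemma dispensable_iso_delete k (D : code k.+1) (i : 'I_k.+1) :
  dispensable D i -> code_iso D (del_neuron i @: D).
Proof.
move=> Di; have [b memb] := dispensable_mem_determined Di.
exists (del_neuron i), (ins_neuron i b); split.
- exact: morphism_del_neuron.
- exact: morphism_ins_neuron.
- exact: ins_neuronK.
- by move=> d _; apply: del_neuronK.
Qed.

Lemma min_neuron_number_reduced n (C : code n) m (D : code m) :
  min_neuron_number C m -> code_iso C D -> reduced D.
Proof.
move=> [_ minm] CD i; suff nDi : ~ dispensable D i.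
  by split => Hi; apply/nDi/trivial_or_redundant_dispensable; [left|right].
case: m minm D CD i => [|k] minm D CD i; first by case: i.
move/dispensable_iso_delete/(code_iso_trans CD) => CDi.
by have := minm k (ex_intro _ _ CDi); rewrite ltnn.
Qed.

Lemma reduced_Tk1_mem n (D : code n) j s :
  reduced D -> Tk D [set j] = Tk D s -> j \in s.
Proof.
move=> rD Ejs; apply/negPn/negP => js.
by have [nt []] := rD j; split => //; exists s.
Qed.

Lemma reduced_Tk1_inj n (D : code n) :
  reduced D -> injective (fun j => Tk D [set j]).
Proof. by move=> rD j j' /(reduced_Tk1_mem rD); rewrite inE => /eqP. Qed.

Lemma reduced_Tk1_neq0 n (D : code n) j : reduced D -> exists d, d \in Tk D [set j].
Proof.
move=> rD; have [nt _] := rD j.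
by case: (set_0Vmem (Tk D [set j])) => [//|[d]]; exists d.
Qed.

Section IsoOfReducedCodes.

Variables (n m : nat) (D : code n) (D' : code m).
Variables (f : {set 'I_n} -> {set 'I_m}) (g : {set 'I_m} -> {set 'I_n}).
Hypotheses (rD : reduced D) (rD' : reduced D').
Hypotheses (mf : morphism D D' f) (mg : morphism D' D g).
Hypotheses (gf : {in D, cancel f g}) (fg : {in D', cancel g f}).

Lemma iso_preim_Tk1 j : exists i, preim_code D f (Tk D' [set j]) = Tk D [set i].
Proof.
have [s Es] : exists s, preim_code D f (Tk D' [set j]) = Tk D s.
  have [d] := reduced_Tk1_neq0 j rD'; rewrite mem_Tk => /andP [dD' jd].
  by apply: (morphism_preim_Tk mf (mg.1 d dD')); rewrite fg // mem_Tk dD'.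
have preim_Tk i : exists t, preim_code D' g (Tk D [set i]) = Tk D' t.
  have [c] := reduced_Tk1_neq0 i rD; rewrite mem_Tk => /andP [cD ic].
  by apply: (morphism_preim_Tk mg (mf.1 c cD)); rewrite gf // mem_Tk cD.
have [t Et] := fin_all_exists preim_Tk.
have mem_g d i : d \in D' -> (i \in g d) = (t i \subset d).
  move=> dD'; move/setP: (Et i) => /(_ d).
  by rewrite mem_preim_code !mem_Tk dD' mg.1 // sub1set.
have Ej : Tk D' [set j] = Tk D' (\bigcup_(i in s) t i).
  apply/setP => d; rewrite !mem_Tk; case/boolP: (d \in D') => //= dD'.
  move/setP: Es => /(_ (g d)); rewrite mem_preim_code !mem_Tk mg.1 // fg // dD' /=.
  move=> ->; apply/subsetP/bigcupsP => [sg i si|tsd i si].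
    by rewrite -mem_g //; apply: sg.
  by rewrite mem_g //; apply: tsd.
have /bigcupP [i si jti] := reduced_Tk1_mem rD' Ej.
exists i; rewrite Es; apply/eqP; rewrite eqEsubset Tk_subset ?sub1set //=.
(* Tk(i) = f^-1(g^-1 Tk(i)) = f^-1 Tk'(t i), contained in f^-1 Tk'(j) = Tk(s) *)
rewrite -Es -(preim_code_cancel mf.1 gf (Tk_sub_code D [set i])) Et.
by apply/preim_codeS/Tk_subset; rewrite sub1set.
Qed.

End IsoOfReducedCodes.

Lemma reduced_iso_perm n m (D : code n) (D' : code m) :
  reduced D -> reduced D' -> code_iso D D' ->
  n = m /\ exists w : 'I_n -> 'I_m,
    bijective w /\ D' = [set w @: d | d : {set 'I_n} in D].
Proof.
move=> rD rD' [f [g [mf mg gf fg]]].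
have [phi Ephi] := fin_all_exists (iso_preim_Tk1 rD rD' mf mg gf fg).
have [psi Epsi] := fin_all_exists (iso_preim_Tk1 rD' rD mg mf fg gf).
have phiK : cancel phi psi.
  move=> j; apply: (reduced_Tk1_inj rD'); rewrite /= -Epsi -Ephi.
  by rewrite preim_code_cancel ?Tk_sub_code //; apply: mg.1.
have psiK : cancel psi phi.
  move=> i; apply: (reduced_Tk1_inj rD); rewrite /= -Ephi -Epsi.
  by rewrite preim_code_cancel ?Tk_sub_code //; apply: mf.1.
have psi_bij : bijective psi by exists phi.
split; first by have := bij_eq_card psi_bij; rewrite !card_ord.
exists psi; split => //.
have f_relabel : {in D, forall c, f c = psi @: c}.
  move=> c cD; rewrite (can2_imset_pre _ psiK phiK); apply/setP => j.
  move/setP: (Ephi j) => /(_ c).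
  by rewrite mem_preim_code !mem_Tk cD mf.1 //= !sub1set inE.
rewrite -(eq_in_imset f_relabel); apply/setP => d; apply/idP/imsetP.
  by move=> dD'; exists (g d); rewrite ?fg //; apply: mg.1.
by case=> c cD ->; apply: mf.1.
Qed.

Theorem theorem1p2 (n : nat) (C : code n) (m : nat) :
  min_neuron_number C m ->
  (exists D : code m, reduced D /\ code_iso C D) /\
  (forall (m' : nat) (D : code m) (D' : code m'),
     reduced D -> code_iso C D -> reduced D' -> code_iso C D' ->
     m = m' /\
     exists w : 'I_m -> 'I_m',
       bijective w /\ D' = [set w @: d | d : {set 'I_m} in D]).
Proof.
move=> minC; split.
  have [[D CD] _] := minC.
  by exists D; split; first exact: min_neuron_number_reduced minC CD.
move=> m' D D' rD CD rD' CD'.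
exact: reduced_iso_perm rD rD' (code_iso_trans (code_iso_sym CD) CD').
Qed.
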